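(* Let $G$ be a finite abelian group, $\Phi$ a normalized $3$-cocycle on $G$, and suppose $\{g_1,\dots,g_n\}\subseteq G$ generates $G$ and $\widetilde{\Phi}_{g_i}(g_j,g_k)=\widetilde{\Phi}_{g_i}(g_k,g_j)$ for all $1\le i,j,k\le n$. Then $\Phi$ is an abelian $3$-cocycle on $G$.
   Context: $\mathbbm{k}$ is algebraically closed of characteristic zero; $\Phi$ takes values in $\mathbbm{k}^*$. For $g\in G$, $\widetilde{\Phi}_g(x,y)=\frac{\Phi(g,x,y)\Phi(x,y,g)}{\Phi(x,g,y)}$. The category ${}^{\mathbbm{k}G}_{\mathbbm{k}G}\mathcal{YD}^{\Phi}$ has objects the $G$-graded vector spaces $V=\bigoplus_gV_g$ with operators $e\triangleright-$ preserving each $V_g$, $1\triangleright v=v$, $e\triangleright(f\triangleright v)=\widetilde{\Phi}_g(e,f)(ef)\triangleright v$ for $v\in V_g$. $\Phi$ is abelian if every simple object of ${}^{\mathbbm{k}G}_{\mathbbm{k}G}\mathcal{YD}^{\Phi}$ is $1$-dimensional. *)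

From HB Require Import structures.
From mathcomp Require Import all_boot all_order all_fingroup all_algebra.
Set Implicit Arguments. Unset Strict Implicit. Unset Printing Implicit Defensive.
Import GRing.Theory.
Local Open Scope ring_scope.

Section YD.
Variables (k : fieldType) (G : finGroupType).

Definition Phit (Phi : G -> G -> G -> k) (g x y : G) : k :=
  Phi g x y * Phi x y g / Phi x g y.

Definition nonvanishing (Phi : G -> G -> G -> k) :=
  forall x y z, Phi x y z != 0.

Definition normalized_3cocycle (Phi : G -> G -> G -> k) :=
  nonvanishing Phi /\
  (forall e f g h : G,
     Phi (e * f)%g g h * Phi e f (g * h)%g
     = Phi e f g * Phi e (f * g)%g h * Phi f g h) /\
  (forall x y : G, Phi 1%g x y = 1 /\ Phi x 1%g y = 1 /\ Phi x y 1%g = 1).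

(* An object of the category YD^Phi (finite-dimensional presentation):
   the homogeneous component V_g is k^(ydim g) (row vectors), and the
   operator e |> - on V_g is v |-> v *m yact g e. *)
Record YDobj (Phi : G -> G -> G -> k) := {
  ydim : G -> nat;
  yact : forall g : G, G -> 'M[k]_(ydim g);
  yact1 : forall g, yact g 1%g = 1%:M;
  yactM : forall g e f,
    yact g f *m yact g e = Phit Phi g e f *: yact g (e * f)%g
}.

Definition ytotdim Phi (X : YDobj Phi) : nat := (\sum_(g : G) ydim X g)%N.

(* A subobject is a family of subspaces W_g <= V_g (row spaces) stable
   under all the operators; X is simple iff it is nonzero and its only
   subobjects are 0 and X itself. *)
Definition ysimple Phi (X : YDobj Phi) : Prop :=
  (0 < ytotdim X)%N /\
  forall W : forall g : G, 'M[k]_(ydim X g),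
    (forall g e, stablemx (W g) (yact X g e)) ->
    (forall g, W g = 0) \/ (forall g, row_full (W g)).

Definition abelian_cocycle (Phi : G -> G -> G -> k) : Prop :=
  forall X : YDobj Phi, ysimple X -> ytotdim X = 1%N.

End YD.

From HB Require Import structures.
From mathcomp Require Import all_boot all_order all_fingroup all_algebra.
From mathcomp Require Import ring.
Local Open Scope ring_scope.

Set Implicit Arguments. Unset Strict Implicit. Unset Printing Implicit Defensive.
Import GRing.Theory.

(* For abelian G every twist Phit Phi g is a 2-cocycle, and the form
   skew (Phit Phi g) x y = Phit Phi g x y / Phit Phi g y x is multiplicative
   in each of g, x and y.  Being 1 on the generators, it is identically 1, so
   every Phit Phi g is symmetric.  Then the operators of a Yetter-Drinfeld
   module on each homogeneous component commute.  A simple object lives in a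
   single degree, where it is an irreducible commuting family of matrices over
   an algebraically closed field: these are scalars, so the degree has
   dimension 1. *)

Section SkewOfTwoCocycle.
Variables (k : fieldType) (G : finGroupType) (s : G -> G -> k).
Hypothesis mulgC : forall x y : G, commute x y.
Hypothesis s_neq0 : forall x y, s x y != 0.
Hypothesis s_cocycle : forall x y z,
  s x y * s (x * y)%g z = s y z * s x (y * z)%g.

Definition skew x y := s x y / s y x.

Lemma skew_neq0 x y : skew x y != 0.
Proof. by rewrite /skew mulf_neq0 ?invr_neq0. Qed.

Lemma skewV x y : skew y x = (skew x y)^-1.
Proof. by rewrite /skew invf_div. Qed.

(* Identities between products of values of a cocycle are proved by writing
   the quotient of both sides as a product of such defects, each equal to 1. *)
Let defect x y z := s x y * s (x * y)%g z / (s y z * s x (y * z)%g).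

Let defect1 x y z : defect x y z = 1.
Proof. by rewrite /defect s_cocycle divff // mulf_neq0. Qed.

Lemma skewMl x y z : skew (x * y)%g z = skew x z * skew y z.
Proof.
have -> : skew (x * y)%g z
    = skew x z * skew y z * (defect x y z / defect x z y * defect z x y).
  rewrite /skew /defect (mulgC z x) (mulgC z y) (mulgC y z).
  by field; rewrite !s_neq0.
by rewrite !defect1 !(mulr1, divr1).
Qed.

Lemma skewMr x y z : skew x (y * z)%g = skew x y * skew x z.
Proof. by rewrite skewV skewMl invfM -!skewV. Qed.

End SkewOfTwoCocycle.

Lemma gen_morph_eq1 (R : idomainType) (gT : finGroupType) (S : {set gT})
    (f : gT -> R) :
  (forall x, f x != 0) -> {morph f : x y / (x * y)%g >-> x * y} ->
  {in S, forall x, f x = 1} -> {in <<S>>%g, forall x, f x = 1}.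
Proof.
move=> f_neq0 fM fS.
have f1 : f 1%g = 1 by apply: (mulfI (f_neq0 1%g)); rewrite -fM mulg1 mulr1.
have kerf : group_set [set x | f x == 1].
  apply/group_setP; split=> [|x y]; rewrite !inE ?f1 //.
  by rewrite fM => /eqP-> /eqP->; rewrite mulr1.
have : (<<S>> \subset Group kerf)%g.
  by rewrite gen_subG; apply/subsetP=> x /fS; rewrite inE => ->.
by move/subsetP=> sub x /sub; rewrite inE => /eqP.
Qed.

Section TwistOfThreeCocycle.
Variables (k : fieldType) (G : finGroupType) (Phi : G -> G -> G -> k).
Hypothesis mulgC : forall x y : G, commute x y.
Hypothesis Phi_neq0 : nonvanishing Phi.
Hypothesis Phi_cocycle : forall e f g h : G,
  Phi (e * f)%g g h * Phi e f (g * h)%g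
  = Phi e f g * Phi e (f * g)%g h * Phi f g h.

Let defect a b c d :=
  Phi a b c * Phi a (b * c)%g d * Phi b c d / (Phi (a * b)%g c d * Phi a b (c * d)%g).

Let defect1 a b c d : defect a b c d = 1.
Proof. by rewrite /defect Phi_cocycle divff // !mulf_neq0. Qed.

Lemma Phit_neq0 g x y : Phit Phi g x y != 0.
Proof. by rewrite /Phit !(mulf_neq0, invr_neq0). Qed.

Lemma Phit_cocycle g x y z :
  Phit Phi g x y * Phit Phi g (x * y)%g z = Phit Phi g y z * Phit Phi g x (y * z)%g.
Proof.
have -> : Phit Phi g x y * Phit Phi g (x * y)%g z
    = Phit Phi g y z * Phit Phi g x (y * z)%g
      * (defect g x y z * defect x y g z / (defect x g y z * defect x y z g)).
  rewrite /Phit /defect (mulgC x g) (mulgC y g) (mulgC z g).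
  by field; rewrite !Phi_neq0.
by rewrite !defect1 !(mulr1, divr1).
Qed.

(* The correction factor Phit x g h * Phit y g h / Phit (x * y) g h is
   symmetric in x and y, hence invisible to [skew]. *)
Lemma PhitMg g h x y :
  Phit Phi (g * h)%g x y * Phit Phi (x * y)%g g h
  = Phit Phi g x y * Phit Phi h x y * Phit Phi x g h * Phit Phi y g h.
Proof.
have -> : Phit Phi (g * h)%g x y * Phit Phi (x * y)%g g h
    = Phit Phi g x y * Phit Phi h x y * Phit Phi x g h * Phit Phi y g h
      * (defect g x h y * defect x g y h
         / (defect g h x y * defect g x y h * defect x g h y * defect x y g h)).
  rewrite /Phit /defect (mulgC x g) (mulgC y g) (mulgC x h) (mulgC y h).
  by field; rewrite !Phi_neq0.
by rewrite !defect1 !(mulr1, divr1).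
Qed.

Lemma skew_PhitMg g h x y :
  skew (Phit Phi (g * h)%g) x y = skew (Phit Phi g) x y * skew (Phit Phi h) x y.
Proof.
have solve_gh a b : Phit Phi (g * h)%g a b
    = Phit Phi g a b * Phit Phi h a b * Phit Phi a g h * Phit Phi b g h
      / Phit Phi (a * b)%g g h.
  by rewrite -PhitMg mulfK ?Phit_neq0.
rewrite /skew !solve_gh (mulgC y x).
by field; rewrite !Phit_neq0.
Qed.

Lemma Phit_sym_of_gen (S : {set G}) : <<S>>%g = [set: G] ->
    {in S & &, forall g x y, Phit Phi g x y = Phit Phi g y x} ->
  forall g x y, Phit Phi g x y = Phit Phi g y x.
Proof.
move=> genS symS.
have skew_Phit_neq0 g := skew_neq0 (Phit_neq0 g).
have gen_eq1 (f : G -> k) : (forall x, f x != 0) ->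
    {morph f : x y / (x * y)%g >-> x * y} -> {in S, forall x, f x = 1} ->
  forall x, f x = 1.
  by move=> f_neq0 fM fS x; apply: (gen_morph_eq1 f_neq0 fM fS); rewrite genS inE.
have skew_g : {in S &, forall x y g, skew (Phit Phi g) x y = 1}.
  move=> x y xS yS; apply: gen_eq1 => [g|g h|g gS]; first exact: skew_Phit_neq0.
    exact: skew_PhitMg.
  by rewrite /skew symS // divff ?Phit_neq0.
have skew_x : {in S, forall y g x, skew (Phit Phi g) x y = 1}.
  move=> y yS g; apply: gen_eq1 => [x|x z|x xS]; first exact: skew_Phit_neq0.
    exact: (skewMl mulgC (Phit_neq0 g) (Phit_cocycle g)).
  exact: skew_g.
move=> g x y; apply/divr1_eq; move: y; apply: gen_eq1 => [y|y z|y yS].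
- exact: skew_Phit_neq0.
- exact: (skewMr mulgC (Phit_neq0 g) (Phit_cocycle g)).
- exact: skew_x.
Qed.

End TwistOfThreeCocycle.

Definition mxfamily_irreducible (k : fieldType) (n : nat) (I : Type)
    (A : I -> 'M[k]_n) :=
  forall W : 'M[k]_n, (forall i, stablemx W (A i)) -> W = 0 \/ row_full W.

Section CommutingIrreducibleFamily.
Variables (k : closedFieldType) (n : nat) (I : Type) (A : I -> 'M[k]_n).
Hypothesis n_gt0 : (0 < n)%N.
Hypothesis A_irr : mxfamily_irreducible A.
Hypothesis A_comm : forall i j, comm_mx (A i) (A j).

Lemma irr_comm_scalar i : exists a, A i = a%:M.
Proof.
have [a] : exists a, root (char_poly (A i)) a.
  by apply/closed_rootP; rewrite size_char_poly; case: n n_gt0.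
rewrite -eigenvalue_root_char => eig_a.
have [eigen0|/(submx_full 1%:M)/eigenspaceP] := A_irr (fun j =>
  comm_mx_stable_eigenspace a (A_comm i j)).
  by move: eig_a; rewrite /eigenvalue eigen0 eqxx.
by rewrite mul1mx scalemx1; exists a.
Qed.

Lemma irr_comm_dim1 : n = 1%N.
Proof.
have line_stable j : stablemx (pid_mx 1 : 'M_n) (A j).
  by have [a ->] := irr_comm_scalar j; apply: stablemxC.
have [line0|] := A_irr line_stable.
  by move/(congr1 mxrank): line0; rewrite rank_pid_mx // mxrank0.
by rewrite /row_full rank_pid_mx // eq_sym => /eqP.
Qed.

End CommutingIrreducibleFamily.

Section SimpleYDObject.
Variables (k : fieldType) (G : finGroupType) (Phi : G -> G -> G -> k).
Variable X : YDobj Phi.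

Lemma yact_comm : (forall x y : G, commute x y) ->
    (forall g x y, Phit Phi g x y = Phit Phi g y x) ->
  forall g e f, comm_mx (yact X g e) (yact X g f).
Proof. by move=> mulgC Phit_sym g e f; rewrite /comm_mx !yactM Phit_sym mulgC. Qed.

Hypothesis X_simple : ysimple X.

Lemma ysimple_irreducible g : mxfamily_irreducible (yact X g).
Proof.
move=> W W_stable; case: X_simple => _ /(_ (dfwith (fun g => 0) W)).
case=> [g' e|/(_ g)|/(_ g)]; rewrite ?dfwith_in; [|by left|by right].
by case: dfwithP => [|g'' _]; [apply: W_stable|apply: stable0mx].
Qed.

Lemma ysimple_support : exists g, (0 < ydim X g)%N /\ ytotdim X = ydim X g.
Proof.
case: X_simple => totdim_gt0 X_irr.
have [g dim_gt0] : exists g, (0 < ydim X g)%N.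
  move: totdim_gt0; rewrite lt0n sum_nat_eq0 negb_forall => /existsP[g].
  by rewrite /= -lt0n; exists g.
have ydim_out g' : g != g' -> ydim X g' = 0%N.
  move=> neq_gg'.
  have : forall h e,
      stablemx (dfwith (fun g => 0) (1%:M : 'M_(ydim X g)) h) (yact X h e).
    move=> h e; case: dfwithP => [|h' _].
      exact/stablemx_unit/unitmx1.
    exact: stable0mx.
  case/X_irr=> [/(_ g)|/(_ g')].
    rewrite dfwith_in => /(congr1 mxrank); rewrite mxrank1 mxrank0 => dim0.
    by rewrite dim0 in dim_gt0.
  by rewrite dfwith_out // /row_full mxrank0 eq_sym => /eqP.
exists g; split=> //.
rewrite /ytotdim (bigD1 g) //= big1 => [|g' neq_g'g]; first exact: addn0.
by apply: ydim_out; rewrite eq_sym.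
Qed.

End SimpleYDObject.

Theorem lemma4p5 (k : closedFieldType) (G : finGroupType)
  (Phi : G -> G -> G -> k) (S : {set G}) :
  [pchar k] =i pred0 ->
  abelian [set: G] ->
  normalized_3cocycle Phi ->
  <<S>>%g = [set: G] ->
  (forall gi gj gk, gi \in S -> gj \in S -> gk \in S ->
     Phit Phi gi gj gk = Phit Phi gi gk gj) ->
  abelian_cocycle Phi.
Proof.
move=> _ G_abelian [Phi_neq0 [Phi_cocycle _]] genS symS X X_simple.
have mulgC (x y : G) : commute x y by apply: (centsP G_abelian); rewrite inE.
have Phit_sym := Phit_sym_of_gen mulgC Phi_neq0 Phi_cocycle genS symS.
have [g [dim_gt0 ->]] := ysimple_support X_simple.
exact: irr_comm_dim1 dim_gt0 (ysimple_irreducible X_simple (g := g))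
  (yact_comm X mulgC Phit_sym g).
Qed.
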